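(* Let $m\ge2$ and let $\mathbb{A}=(a_{i_1i_2\ldots i_m})$ be a nonnegative strongly primitive tensor of order $m$ and dimension $n$. Then for every $\alpha\in[n]^{m-1}$ there exists $i\in[n]$ such that $a_{i\alpha}>0$.
   Context: General product of dimension-$n$ tensors: for $\mathbb{A}$ of order $m\ge2$ and $\mathbb{B}$ of order $k\ge1$, $(\mathbb{A}\mathbb{B})_{i\alpha_1\ldots\alpha_{m-1}}=\sum_{i_2,\ldots,i_m=1}^n a_{ii_2\ldots i_m}b_{i_2\alpha_1}\cdots b_{i_m\alpha_{m-1}}$ ($i\in[n]$, $\alpha_l\in[n]^{k-1}$), a tensor of order $(m-1)(k-1)+1$; it is associative and $\mathbb{A}^k$ denotes the $k$-fold power (of order $(m-1)^k+1$). A nonnegative tensor $\mathbb{A}$ is strongly primitive if there is a positive integer $k$ such that all entries of $\mathbb{A}^k$ are positive. *)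

From HB Require Import structures.
From mathcomp Require Import all_boot all_order all_algebra.
Set Implicit Arguments. Unset Strict Implicit. Unset Printing Implicit Defensive.
Import Order.TTheory GRing.Theory Num.Theory.
Local Open Scope ring_scope.

(* A tensor of dimension n is represented by its entry function on index
   sequences; a tensor "of order p" is one whose entries are only ever read
   on sequences of length p (entries at other lengths are irrelevant junk). *)
Definition tensor (R : Type) (n : nat) := seq 'I_n -> R.

(* General product (A B) of an order-m tensor A with an order-k tensor B:
   (A B)_{i alpha_1 ... alpha_{m-1}} =
      sum_{i_2..i_m} a_{i i_2 .. i_m} b_{i_2 alpha_1} ... b_{i_m alpha_{m-1}},
   where each alpha_l is a block of length k-1 of the index sequence. *)
Definition tprod (R : realFieldType) (n m k : nat) (A B : tensor R n)
  : tensor R n :=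
  fun s => match s with
  | [::] => 0
  | i :: beta =>
      \sum_(t : (m.-1).-tuple 'I_n)
         A (i :: val t) *
         \prod_(l < m.-1) B (tnth t l :: take k.-1 (drop (l * k.-1) beta))
  end.

(* tpow m A j = A^(j+1), a tensor of order (m-1)^(j+1) + 1,
   computed as A^(j+2) = A (A^(j+1)) (the product is associative). *)
Fixpoint tpow (R : realFieldType) (n m : nat) (A : tensor R n) (j : nat)
  : tensor R n :=
  match j with
  | 0 => A
  | j'.+1 => tprod m ((m.-1) ^ j'.+1 + 1) A (tpow m A j')
  end.

(* A^k for k >= 1 *)
Definition tpower (R : realFieldType) (n m : nat) (A : tensor R n) (k : nat)
  : tensor R n := tpow m A k.-1.

Definition tensor_nonneg (R : realFieldType) (n m : nat) (A : tensor R n) :=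
  forall t : m.-tuple 'I_n, 0 <= A (val t).

Definition strongly_primitive (R : realFieldType) (n m : nat) (A : tensor R n) :=
  exists k : nat, (0 < k)%N /\
    forall t : ((m.-1) ^ k + 1).-tuple 'I_n, 0 < tpower m A k (val t).

From HB Require Import structures.
From mathcomp Require Import all_boot all_order all_algebra.
Set Implicit Arguments. Unset Strict Implicit. Unset Printing Implicit Defensive.
Import Order.TTheory GRing.Theory Num.Theory.
Local Open Scope ring_scope.

(* If every entry a_{i alpha} vanished for a fixed alpha, then replicating
   alpha in every block gives an index beta with (A B)_{i beta} = 0 as soon as
   B_{j alpha} = 0 for all j; iterating, each power A^k has a vanishing
   fiber, contradicting strong primitivity. *)

Lemma take_drop_flatten_nseq (T : Type) (g : seq T) (c l : nat) :
  (l < c)%N -> take (size g) (drop (l * size g) (flatten (nseq c g))) = g.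
Proof.
elim: l c => [|l IH] [|c] //= lt_lc; first by rewrite mul0n drop0 take_size_cat.
by rewrite mulSn addnC -drop_drop drop_size_cat // IH.
Qed.

Lemma size_flatten_nseq (T : Type) (g : seq T) (c : nat) :
  size (flatten (nseq c g)) = (c * size g)%N.
Proof. by rewrite size_flatten /shape map_nseq sumn_nseq mulnC. Qed.

Section ZeroFiber.

Variables (R : realFieldType) (n m : nat).
Hypothesis m_ge2 : (2 <= m)%N.

Lemma tprod_zero_fiber (k : nat) (A B : tensor R n) (g : seq 'I_n) :
  size g = k.-1 -> (forall j, B (j :: g) = 0) ->
  forall i, tprod m k A B (i :: flatten (nseq m.-1 g)) = 0.
Proof.
move=> size_g Bg0 i /=; apply: big1 => t _.
have m1_gt0 : (0 < m.-1)%N by rewrite -subn1 subn_gt0.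
rewrite (bigD1 (Ordinal m1_gt0)) //= -size_g take_drop_flatten_nseq //.
by rewrite Bg0 mul0r mulr0.
Qed.

Lemma tpow_zero_fiber (A : tensor R n) (g : seq 'I_n) :
  size g = m.-1 -> (forall i, A (i :: g) = 0) ->
  forall j, exists2 g' : seq 'I_n, size g' = (m.-1 ^ j.+1)%N &
    forall i, tpow m A j (i :: g') = 0.
Proof.
move=> size_g Ag0; elim=> [|j [g' size_g' Ag'0]]; first by exists g; rewrite ?expn1.
exists (flatten (nseq m.-1 g')); first by rewrite size_flatten_nseq size_g' -expnS.
by apply: tprod_zero_fiber; rewrite // size_g' addn1.
Qed.

End ZeroFiber.

Lemma nonneg_not_pos_eq0 (R : realFieldType) (n m : nat) (A : tensor R n)
    (s : seq 'I_n) :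
  tensor_nonneg m A -> size s = m -> ~~ (0 < A s) -> A s = 0.
Proof.
move=> A_ge0 /eqP size_s A_npos.
have := A_ge0 (Tuple size_s) => /= A_ge0s.
by apply/eqP; rewrite eq_le A_ge0s andbT leNgt.
Qed.

Theorem proposition4p14 (R : realFieldType) (n m : nat) (A : tensor R n) :
  (2 <= m)%N ->
  tensor_nonneg m A ->
  strongly_primitive m A ->
  forall alpha : (m.-1).-tuple 'I_n, exists i : 'I_n, 0 < A (i :: val alpha).
Proof.
move=> m_ge2 A_ge0 [k [k_gt0 Ak_pos]] alpha.
have [/existsP //|/existsPn A_npos] := boolP [exists i, 0 < A (i :: val alpha)].
have Aalpha0 i : A (i :: val alpha) = 0.
  apply: (nonneg_not_pos_eq0 A_ge0 _ (A_npos i)).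
  by rewrite /= size_tuple prednK // (leq_trans _ m_ge2).
have [g size_g Akg0] := tpow_zero_fiber m_ge2 (size_tuple alpha) Aalpha0 k.-1.
rewrite prednK // in size_g.
have : (0 < size g)%N by rewrite size_g expn_gt0 -subn1 subn_gt0 m_ge2.
case: g size_g Akg0 => // x g size_g Akg0 _.
have /eqP size_xxg : size (x :: x :: g) = ((m.-1) ^ k + 1)%N by rewrite /= -size_g addn1.
by move: (Ak_pos (Tuple size_xxg)); rewrite /tpower /= Akg0 ltxx.
Qed.
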